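(* Let $S$ be a nonempty complete lattice and let $F:S\to 2^S$ be a V-ascending correspondence. Suppose that for every $x\in S$, the subset $F(x)$ is nonempty and chain-subcomplete in $S$. Then $\mathrm{Fix}(F)=\{s\in S: s\in F(s)\}$, with the order induced from $S$, is a nonempty complete lattice.
   Context: A poset $S$ is a complete lattice if every nonempty subset $A\subset S$ has a supremum $\sup_S A$ and an infimum $\inf_S A$ in $S$. A subset $T$ of a poset $S$ is chain-subcomplete upwards (resp. downwards) in $S$ if for every nonempty chain $C\subset T$, $\sup_S C$ (resp. $\inf_S C$) exists and belongs to $T$; it is chain-subcomplete in $S$ if it is both. For a lattice $S$ and a correspondence $F:S\to 2^S$: $F$ is lower V-ascending if for all $x<x'$ in $S$ (strict inequality), every $y\in F(x)$ and every $y'\in F(x')$, one has $y\wedge y'\in F(x)$; $F$ is upper V-ascending if under the same conditions $y\vee y'\in F(x')$; $F$ is V-ascending if it is both upper and lower V-ascending. *)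

From mathcomp Require Import all_boot all_order.
Set Implicit Arguments. Unset Strict Implicit. Unset Printing Implicit Defensive.
Import Order.TTheory.
Local Open Scope order_scope.

Section Defs.
Context {d : Order.disp_t} {T : porderType d}.

Definition is_sup_in (X A : T -> Prop) (s : T) : Prop :=
  X s /\ (forall a, A a -> a <= s) /\
  (forall u, X u -> (forall a, A a -> a <= u) -> s <= u).

Definition is_inf_in (X A : T -> Prop) (s : T) : Prop :=
  X s /\ (forall a, A a -> s <= a) /\
  (forall u, X u -> (forall a, A a -> u <= a) -> u <= s).

Definition subset (A B : T -> Prop) : Prop := forall x, A x -> B x.
Definition nonempty (A : T -> Prop) : Prop := exists x, A x.
Definition is_chain (C : T -> Prop) : Prop :=
  forall x y, C x -> C y -> x <= y \/ y <= x.

Definition complete_sublattice (X : T -> Prop) : Prop :=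
  forall A, subset A X -> nonempty A ->
    (exists s, is_sup_in X A s) /\ (exists s, is_inf_in X A s).

Definition complete_lattice : Prop := complete_sublattice (fun _ => True).

Definition chain_subcomplete_up (X : T -> Prop) : Prop :=
  forall C, subset C X -> nonempty C -> is_chain C ->
    exists s, is_sup_in (fun _ => True) C s /\ X s.
Definition chain_subcomplete_down (X : T -> Prop) : Prop :=
  forall C, subset C X -> nonempty C -> is_chain C ->
    exists s, is_inf_in (fun _ => True) C s /\ X s.
Definition chain_subcomplete (X : T -> Prop) : Prop :=
  chain_subcomplete_up X /\ chain_subcomplete_down X.

End Defs.

Section Corr.
Context {d : Order.disp_t} {T : latticeType d}.

Definition lower_V_ascending (F : T -> T -> Prop) : Prop :=
  forall x x', x < x' -> forall y y', F x y -> F x' y' -> F x (y `&` y').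
Definition upper_V_ascending (F : T -> T -> Prop) : Prop :=
  forall x x', x < x' -> forall y y', F x y -> F x' y' -> F x' (y `|` y').
Definition V_ascending (F : T -> T -> Prop) : Prop :=
  upper_V_ascending F /\ lower_V_ascending F.

Definition Fix (F : T -> T -> Prop) : T -> Prop := fun s => F s s.

End Corr.

From Pilot Require Import Defs.
From mathcomp Require Import all_boot all_order.
From mathcomp Require Import boolp.
From mathcomp Require classical_sets.
Import Order.TTheory.
Local Open Scope order_scope.

(* For A included in Fix F, let a = sup A and let m be the infimum of the points
   x >= a at which F x has an element below x.  If m were not one of them, it
   would lie strictly below each of them, and so would a minimal element z of
   F m (lower V-ascendance puts z `&` y in F m, y the witness for x), making z a
   witness for m.  A maximal element y of F m below m lies above every s in A
   (upper V-ascendance puts s `|` y in F m), hence above a; were y < m, lower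
   V-ascendance would make y one of the points, contradicting m <= y.  So m is
   in F m, and it is the least fixed point above A.  Infima follow by duality,
   and the supremum of the empty family is a fixed point.  Zorn's lemma provides
   z and y, chains being bounded by chain-subcompleteness. *)

Lemma exists_maximal_in {d : Order.disp_t} {T : porderType d} (X : T -> Prop) :
  nonempty X ->
  (forall C, Defs.subset C X -> nonempty C -> is_chain C ->
     exists2 u, X u & forall c, C c -> c <= u) ->
  exists2 z, X z & forall x, X x -> z <= x -> x = z.
Proof.
move=> [x0 Xx0] chain_ub; pose U := {x : T | `[< X x >]}.
have XU (u : U) : X (val u) := asboolW (valP u).
pose inU x (Xx : X x) : U := exist _ x (asboolT Xx).
have [z zmax] : exists z : U, forall u, val z <= val u -> u = z.
  apply: (@classical_sets.Zorn U (fun u v => val u <= val v)).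
  - by move=> u; exact: lexx.
  - by move=> u v w; exact: le_trans.
  - by move=> u v uv vu; apply: val_inj; apply: le_anti; rewrite uv vu.
  move=> A A_chain.
  have [[u0 Au0]|A0] := pselect (exists u, A u); last first.
    by exists (inU x0 Xx0) => u Au; case: A0; exists u.
  have [| | |c Xc c_ub] := chain_ub (fun x => exists2 u : U, A u & val u = x).
  - by move=> _ [v _ <-].
  - by exists (val u0), u0.
  - by move=> _ _ [u Au <-] [v Av <-]; exact: A_chain.
  exists (inU c Xc) => v Av; exact: c_ub (ex_intro2 _ _ v Av erefl).
exists (val z) => [|x Xx zx]; first exact: XU.
by have := zmax (inU x Xx) zx => <-.
Qed.

Lemma exists_minimal_in {d : Order.disp_t} {T : porderType d} (X : T -> Prop) :
  nonempty X ->
  (forall C, Defs.subset C X -> nonempty C -> is_chain C ->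
     exists2 l, X l & forall c, C c -> l <= c) ->
  exists2 z, X z & forall x, X x -> x <= z -> x = z.
Proof.
move=> X_ne chain_lb; have [|z Xz zmin] := exists_maximal_in (T := T^d) X X_ne.
  move=> C CX C_ne C_chain; apply: chain_lb => // x y Cx Cy.
  by rewrite or_comm; exact: C_chain.
by exists z.
Qed.

Lemma complete_lattice_dual {d : Order.disp_t} {T : porderType d} :
  complete_lattice (T := T) -> complete_lattice (T := T^d).
Proof.
move=> CL A AT A_ne; have [[s s_sup] [i i_inf]] := CL A AT A_ne.
by split; [exists i | exists s].
Qed.

Lemma chain_subcomplete_up_dual {d : Order.disp_t} {T : porderType d}
    (X : T -> Prop) :
  chain_subcomplete_down X -> chain_subcomplete_up (T := T^d) X.
Proof.
move=> X_down C CX C_ne C_chain; apply: X_down => // x y Cx Cy.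
by rewrite or_comm; exact: C_chain.
Qed.

Lemma chain_subcomplete_down_dual {d : Order.disp_t} {T : porderType d}
    (X : T -> Prop) :
  chain_subcomplete_up X -> chain_subcomplete_down (T := T^d) X.
Proof.
move=> X_up C CX C_ne C_chain; apply: X_up => // x y Cx Cy.
by rewrite or_comm; exact: C_chain.
Qed.

Lemma upper_V_ascending_dual {d : Order.disp_t} {T : latticeType d}
    (F : T -> T -> Prop) :
  lower_V_ascending F -> upper_V_ascending (T := T^d) F.
Proof.
by move=> LV x x' x'x y y' Fxy Fx'y'; have := LV _ _ x'x _ _ Fx'y' Fxy; rewrite meetC.
Qed.

Lemma lower_V_ascending_dual {d : Order.disp_t} {T : latticeType d}
    (F : T -> T -> Prop) :
  upper_V_ascending F -> lower_V_ascending (T := T^d) F.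
Proof.
by move=> UV x x' x'x y y' Fxy Fx'y'; have := UV _ _ x'x _ _ Fx'y' Fxy; rewrite joinC.
Qed.

Lemma exists_sup {d : Order.disp_t} {T : porderType d} :
  inhabited T -> complete_lattice (T := T) ->
  forall A : T -> Prop, exists s, is_sup_in (fun _ => True) A s.
Proof.
move=> [t] CL A; have [A_ne|A0] := pselect (nonempty A).
  exact: (CL A (fun _ _ => I) A_ne).1.
have [_ [b [_ [b_lb _]]]] := CL (fun _ => True) (fun _ _ => I) (ex_intro _ t I).
exists b; split=> //; split=> [x Ax|u _ _]; last exact: b_lb.
by case: A0; exists x.
Qed.

Definition deflating {d : Order.disp_t} {T : porderType d}
    (F : T -> T -> Prop) (x : T) : Prop :=
  exists2 y, F x y & y <= x.

Section FixSup.
Context {d : Order.disp_t} {T : latticeType d} (F : T -> T -> Prop).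
Hypothesis T_inh : inhabited T.
Hypothesis T_complete : complete_lattice (T := T).
Hypothesis F_upper : upper_V_ascending F.
Hypothesis F_lower : lower_V_ascending F.
Hypothesis F_nonempty : forall x, nonempty (F x).
Hypothesis F_up : forall x, chain_subcomplete_up (F x).
Hypothesis F_down : forall x, chain_subcomplete_down (F x).

Lemma deflating_of_lt (x x' : T) : x < x' -> F x' x -> deflating F x.
Proof.
move=> xx' Fx'x; have [w Fxw] := F_nonempty x.
by exists (w `&` x); [exact: F_lower _ _ xx' _ _ Fxw Fx'x | exact: leIr].
Qed.

Lemma deflating_inf (D : T -> Prop) (m : T) :
  (forall x, D x -> deflating F x) -> is_inf_in (fun _ => True) D m ->
  deflating F m.
Proof.
move=> D_defl [_ [m_lb m_glb]].
have [z Fmz z_min] : exists2 z, F m z & forall w, F m w -> w <= z -> w = z.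
  apply: exists_minimal_in (F_nonempty m) _ => C CF C_ne C_chain.
  by have [l [[_ [l_lb _]] Fml]] := F_down m _ CF C_ne C_chain; exists l.
have [//|m_ndefl] := pselect (deflating F m).
exists z => //; apply: m_glb => // x Dx.
have mx : m < x.
  rewrite lt_neqAle m_lb // andbT; apply/eqP => mx.
  by apply: m_ndefl; rewrite mx; exact: D_defl.
have [y Fxy yx] := D_defl x Dx.
have zy : z `&` y = z := z_min _ (F_lower _ _ mx _ _ Fmz Fxy) (leIl z y).
by apply: le_trans yx; rewrite -zy; exact: leIr.
Qed.

Lemma le_maximal_below (s m y : T) : F s s -> s < m -> F m y -> y <= m ->
  (forall w, F m w /\ w <= m -> y <= w -> w = y) -> s <= y.
Proof.
move=> Fss sm Fmy ym y_max.
have <- : s `|` y = y.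
  apply: y_max _ (leUr y s); split; first exact: F_upper _ _ sm _ _ Fss Fmy.
  by rewrite leUx (ltW sm) ym.
exact: leUl.
Qed.

Lemma inf_deflating_above_sup_fixed (A : T -> Prop) (a m : T) :
  Defs.subset A (Fix F) -> is_sup_in (fun _ => True) A a ->
  is_inf_in (fun _ => True) (fun x => a <= x /\ deflating F x) m -> F m m.
Proof.
move=> AFix [_ [a_ub a_lub]] m_inf; have [_ [m_lb m_glb]] := m_inf.
have [Am|m_notA] := pselect (A m); first exact: AFix.
have am : a <= m := m_glb a I (fun x Dx => Dx.1).
have [y0 Fmy0 y0m] : deflating F m by apply: deflating_inf m_inf => x [].
have [y [Fmy ym] y_max] : exists2 y, F m y /\ y <= m &
    forall w, F m w /\ w <= m -> y <= w -> w = y.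
  apply: exists_maximal_in; first by exists y0.
  move=> C CF C_ne C_chain.
  have [u [[_ [u_ub u_lub]] Fmu]] :=
    F_up m _ (fun c Cc => (CF c Cc).1) C_ne C_chain.
  exists u => //; split=> //; apply: u_lub => // c Cc; exact: (CF c Cc).2.
have ay : a <= y.
  apply: a_lub => // s As; apply: le_maximal_below (AFix s As) _ Fmy ym y_max.
  rewrite lt_neqAle (le_trans (a_ub s As) am) andbT.
  by apply/eqP => sm; apply: m_notA; rewrite -sm.
move: ym; rewrite le_eqVlt => /orP[/eqP ym|ym]; first by rewrite ym in Fmy.
have my := m_lb y (conj ay (deflating_of_lt _ _ ym Fmy)).
by rewrite (lt_geF ym) in my.
Qed.

Lemma exists_sup_in_Fix (A : T -> Prop) :
  Defs.subset A (Fix F) -> exists s, is_sup_in (Fix F) A s.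
Proof.
move=> AFix; have [a a_sup] := exists_sup T_inh T_complete A.
have [top [_ [top_ub _]]] := exists_sup T_inh T_complete (fun _ => True).
have D_ne : nonempty (fun x => a <= x /\ deflating F x).
  exists top; split; first exact: top_ub.
  by have [y Fy] := F_nonempty top; exists y => //; exact: top_ub.
have [_ [m m_inf]] := T_complete _ (fun _ _ => I) D_ne.
exists m; split; first exact: inf_deflating_above_sup_fixed a_sup m_inf.
case: a_sup m_inf => [_ [a_ub a_lub]] [_ [m_lb m_glb]].
have am : a <= m := m_glb a I (fun x Dx => Dx.1).
split=> [s As|u Fuu u_ub]; first exact: le_trans (a_ub s As) am.
by apply: m_lb; split; [exact: a_lub | exists u].
Qed.

End FixSup.

Theorem theorem1p2 (d : Order.disp_t) (S : latticeType d) (F : S -> S -> Prop) :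
  inhabited S ->
  complete_lattice (T := S) ->
  V_ascending F ->
  (forall x : S, nonempty (F x) /\ chain_subcomplete (F x)) ->
  nonempty (Fix F) /\ complete_sublattice (Fix F).
Proof.
move=> S_inh S_complete [F_upper F_lower] F_props.
have F_nonempty x := (F_props x).1.
have F_up x := (F_props x).2.1.
have F_down x := (F_props x).2.2.
have sup := exists_sup_in_Fix F S_inh S_complete F_upper F_lower F_nonempty F_up F_down.
have inf := exists_sup_in_Fix (T := S^d) F S_inh (complete_lattice_dual S_complete)
  (upper_V_ascending_dual _ F_lower) (lower_V_ascending_dual _ F_upper) F_nonempty
  (fun x => chain_subcomplete_up_dual _ (F_down x))
  (fun x => chain_subcomplete_down_dual _ (F_up x)).
split; first by have [m [Fmm _]] := sup _ (fun _ f => False_ind _ f); exists m.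
by move=> A AFix _; split; [exact: sup | exact: inf].
Qed.
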